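(* Let $A\in\mathbb{R}_{\max}^{n\times n}$ with $\lambda(A)=0$, let $g=g(\mathrm{crit}(A))$, assume $T_1(A)=\mathrm{DM}(g,n)$ and that $\mathrm{crit}(A)$ contains, up to choice of first node, a unique cycle $Z_0$ of length $g$. Then in any interesting walk each node of $Z_0$ occurs exactly $g$ times and each node not in $Z_0$ occurs exactly $g+1$ times.
   Context: Max-plus semiring $\mathbb{R}_{\max}=\mathbb{R}\cup\{-\infty\}$ with $a\oplus b=\max(a,b)$, $a\otimes b=a+b$; $(AB)_{ij}=\max_k(a_{ik}+b_{kj})$; $A^t$ is the $t$-th max-plus power, $A^0=I$. $\mathcal{D}(A)$ is the digraph on $\{1,\dots,n\}$ with arc $(i,j)$ of weight $a_{ij}$ whenever $a_{ij}\ne-\infty$. A walk is a node sequence whose consecutive pairs are arcs, its length is its number of arcs and its weight the sum of its arc weights; cycles are closed walks with no proper closed subwalk. $\lambda(A)$ is the maximal cycle mean. $\mathrm{crit}(A)$ is the subgraph of all nodes and arcs of cycles attaining $\lambda(A)$; its nodes are critical. $g(\mathrm{crit}(A))$ is the maximum over strongly connected components of $\mathrm{crit}(A)$ of their minimal cycle length. The cyclicity of $\mathrm{crit}(A)$ is the lcm over components of the gcd of their cycle lengths. CSR terms: with $\gamma$ the cyclicity of $\mathrm{crit}(A)$ and $\lambda(A)=0$, $M=I\oplus N\oplus\dots\oplus N^{n-1}$ where $N=A^\gamma$: $c_{ij}=m_{ij}$ if $j$ critical, else $-\infty$; $r_{ij}=m_{ij}$ if $i$ critical, else $-\infty$; $s_{ij}=a_{ij}$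 if $(i,j)$ is an arc of $\mathrm{crit}(A)$, else $-\infty$; $CS^tR[A]$ is the product $CS^tR$. $B_N$ has $(B_N)_{ij}=-\infty$ if $i$ or $j$ is critical and $a_{ij}$ otherwise. $T_1(A)$ is the least $T\ge0$ with $A^t=CS^tR[A]\oplus B_N^t$ for all $t\ge T$. $\mathrm{DM}(g,n)=g(n-2)+n$. Twice optimal / interesting walks: a walk $W$ from $i$ to $j$ passing through at least one node of $Z_0$ is twice optimal if it has maximal weight among all walks from $i$ to $j$ passing through a node of $Z_0$ whose length is congruent to the length of $W$ modulo $g$, and has minimal length among all such walks of maximal weight. It is interesting if it is twice optimal and has length $\mathrm{DM}(g,n)+g-1$. *)

(* Weights live in an arbitrary real field R
   (the paper uses R = the real numbers); -oo is encoded as None. *)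
From HB Require Import structures.
From mathcomp Require Import all_boot all_order all_algebra.
From Stdlib Require Import ClassicalDescription.
Set Implicit Arguments. Unset Strict Implicit. Unset Printing Implicit Defensive.
Import Order.TTheory GRing.Theory Num.Theory.
Local Open Scope ring_scope.

Definition asbool (P : Prop) : bool :=
  if excluded_middle_informative P then true else false.

Section MaxPlus.
Variable R : realFieldType.
Variable n : nat.
Implicit Types (A B : 'M[option R]_n) (w : seq 'I_n).

Definition mpadd (a b : option R) : option R :=
  match a, b with
  | Some x, Some y => Some (Num.max x y)
  | None, _ => b
  | _, None => a
  end.
Definition mpmul (a b : option R) : option R :=
  match a, b with
  | Some x, Some y => Some (x + y)
  | _, _ => None
  end.

Definition mpmx_add A B : 'M[option R]_n := \matrix_(i, j) mpadd (A i j) (B i j).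
Definition mpmx_mul A B : 'M[option R]_n :=
  \matrix_(i, j) \big[mpadd/None]_(k < n) mpmul (A i k) (B k j).
Definition mpmx_one : 'M[option R]_n := \matrix_(i, j) if i == j then Some 0 else None.
Definition mpmx_pow A (t : nat) : 'M[option R]_n := iter t (mpmx_mul A) mpmx_one.

Definition arcA A : rel 'I_n := fun i j => A i j != None.

Definition is_walk (e : rel 'I_n) w : bool :=
  if w is x :: p then path e x p else false.
Definition wlen w : nat := (size w).-1.
Definition wweight A w : R := \sum_(a <- zip w (behead w)) odflt 0 (A a.1 a.2).
Definition walk_from_to A (i j : 'I_n) w : bool :=
  [&& is_walk (arcA A) w, ohead w == Some i & ohead (rev w) == Some j].

(* cycle of the digraph with arc relation e: closed walk of length >= 1
   with no proper closed subwalk (a closed subwalk being a segment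
   w_a ... w_b, a < b, with w_a = w_b) *)
Definition is_cycle (e : rel 'I_n) w : bool :=
  if w is x :: p then
    [&& path e x p, (0 < size p)%N, last x p == x &
        seq.all (fun a : nat => seq.all (fun b : nat =>
          ((a < b)%N && (nth x w a == nth x w b)) ==> ((a == 0)%N && (b == size p)))
          (seq.iota 0 (size w))) (seq.iota 0 (size w))]
  else false.

Definition cmean A w : R := wweight A w / (wlen w)%:R.

Definition is_lambda A (l : R) : Prop :=
  (exists c, is_cycle (arcA A) c /\ cmean A c = l) /\
  (forall c, is_cycle (arcA A) c -> cmean A c <= l).

Definition crit_cycle A c : Prop := is_cycle (arcA A) c /\ is_lambda A (cmean A c).
Definition critical A (i : 'I_n) : bool := asbool (exists c, crit_cycle A c /\ i \in c).
Definition crit_arc A : rel 'I_n :=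
  fun i j => asbool (exists c, crit_cycle A c /\ (i, j) \in zip c (behead c)).

Definition same_scc A (i j : 'I_n) : bool :=
  connect (crit_arc A) i j && connect (crit_arc A) j i.
Definition comp_cycle A (i : 'I_n) c : Prop :=
  is_cycle (crit_arc A) c /\ seq.all (same_scc A i) c.

Definition comp_girth A i (m : nat) : Prop :=
  (exists c, comp_cycle A i c /\ wlen c = m) /\
  (forall c, comp_cycle A i c -> (m <= wlen c)%N).
Definition is_g A (g : nat) : Prop :=
  (exists i, critical A i /\ comp_girth A i g) /\
  (forall i m, critical A i -> comp_girth A i m -> (m <= g)%N).

Definition comp_gcd A i (d : nat) : Prop :=
  (forall c, comp_cycle A i c -> (d %| wlen c)%N) /\
  (forall d', (forall c, comp_cycle A i c -> (d' %| wlen c)%N) -> (d' %| d)%N).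
Definition is_cyclicity A (gam : nat) : Prop :=
  (forall i d, critical A i -> comp_gcd A i d -> (d %| gam)%N) /\
  (forall g', (forall i d, critical A i -> comp_gcd A i d -> (d %| g')%N) ->
              (gam %| g')%N).

Definition mpmx_zero : 'M[option R]_n := \matrix_(i, j) None.

Definition csr_M A (gam : nat) : 'M[option R]_n :=
  \big[mpmx_add/mpmx_zero]_(k < n) mpmx_pow (mpmx_pow A gam) k.
Definition csr_C A gam : 'M[option R]_n :=
  \matrix_(i, j) if critical A j then csr_M A gam i j else None.
Definition csr_R A gam : 'M[option R]_n :=
  \matrix_(i, j) if critical A i then csr_M A gam i j else None.
Definition csr_S A : 'M[option R]_n :=
  \matrix_(i, j) if crit_arc A i j then A i j else None.
Definition csr_term A gam (t : nat) : 'M[option R]_n :=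
  mpmx_mul (mpmx_mul (csr_C A gam) (mpmx_pow (csr_S A) t)) (csr_R A gam).
Definition B_N A : 'M[option R]_n :=
  \matrix_(i, j) if critical A i || critical A j then None else A i j.

Definition T1_good A gam (T : nat) : Prop :=
  forall t, (T <= t)%N ->
    mpmx_pow A t = mpmx_add (csr_term A gam t) (mpmx_pow (B_N A) t).
Definition is_T1 A (T : nat) : Prop :=
  exists gam, is_cyclicity A gam /\
    T1_good A gam T /\ (forall T', T1_good A gam T' -> (T <= T')%N).

Definition unique_short_cycle A (g : nat) (Z0 : seq 'I_n) : Prop :=
  [/\ is_cycle (crit_arc A) Z0, wlen Z0 = g &
      forall c, is_cycle (crit_arc A) c -> wlen c = g ->
        exists k, behead c = rot k (behead Z0)].

End MaxPlus.

(* DM(g,n) = g(n-2)+n ; written so that truncated subtraction is exact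
   whenever n >= 1 and 1 <= g <= n (always the case here) *)
Definition DM (g n : nat) : nat := (g * n + n - g.*2)%N.

Section Walks.
Variable R : realFieldType.
Variable n : nat.
Implicit Types (A : 'M[option R]_n) (w : seq 'I_n).

Definition twice_optimal A (g : nat) (Z0 : seq 'I_n) (i j : 'I_n) W : Prop :=
  [/\ walk_from_to A i j W, has (mem Z0) W &
      forall V, walk_from_to A i j V -> has (mem Z0) V ->
        wlen V = wlen W %[mod g] ->
        wweight A V <= wweight A W /\
        (wweight A V = wweight A W -> (wlen W <= wlen V)%N)].

Definition interesting A g Z0 i j W : Prop :=
  twice_optimal A g Z0 i j W /\ wlen W = (DM g n + g - 1)%N.
End Walks.

From HB Require Import structures.
From mathcomp Require Import all_boot all_order all_algebra.
From mathcomp Require Import zify.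
Set Implicit Arguments. Unset Strict Implicit. Unset Printing Implicit Defensive.
Import Order.TTheory GRing.Theory Num.Theory.
Local Open Scope ring_scope.

(* If a node y occurs r + 1 times in a walk W, then W = u y c_1 y ... y c_r y v, and
   every loop y c_k y has nonpositive weight since lambda(A) = 0.  Among g such loops
   some nonempty subfamily has total length divisible by g (pigeonhole on the prefix
   sums modulo g); deleting it yields a walk with the same ends, congruent length, no
   smaller weight and strictly smaller length.  For a twice optimal W this is only
   possible if the deletion loses every node of Z0.  Hence a node of Z0 occurs at most
   g times, and any other node at most g + 1 times (one loop containing a node of Z0
   can be spared).  An interesting walk has DM(g,n) + g = g |Z0| + (g+1) (n - |Z0|)
   nodes, so all these bounds are attained. *)

Lemma not_uniq_cat (T : eqType) (s : seq T) :
  ~~ uniq s -> exists s1 y s2 s3, s = s1 ++ y :: s2 ++ y :: s3.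
Proof.
elim: s => [|a s IH] //=; rewrite negb_and negbK.
case/orP=> [/splitPr[p1 p2] | /IH[s1 [y [s2 [s3 ->]]]]]; first by exists [::], a, p1, p2.
by exists (a :: s1), y, s2, s3.
Qed.

Section Loops.
Variable T : eqType.
Implicit Types (x z : T) (s u v c : seq T) (cs : seq (seq T)).

Definition cat_loops x cs v := foldr (fun c acc => c ++ x :: acc) v cs.

Lemma cat_loops_cons x c cs v : cat_loops x (c :: cs) v = c ++ x :: cat_loops x cs v.
Proof. by []. Qed.

Lemma path_cat_loops (e : rel T) x cs v :
  path e x (cat_loops x cs v) = all (fun c => path e x (rcons c x)) cs && path e x v.
Proof. by elim: cs => [|c cs IH] //=; rewrite cat_path rcons_path /= IH !andbA. Qed.

Lemma size_cat_loops x cs v :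
  size (cat_loops x cs v) = (\sum_(c <- cs) (size c).+1 + size v)%N.
Proof. by elim: cs => [|c cs IH]; rewrite ?big_nil ?big_cons //= size_cat /= IH; lia. Qed.

Lemma last_cat_loops x cs v : last x (cat_loops x cs v) = last x v.
Proof. by elim: cs => [|c cs IH] //=; rewrite last_cat. Qed.

Lemma mem_cat_loops x z cs v : (z \in cat_loops x cs v) =
  [|| (z == x) && (cs != [::]), has (fun c => z \in c) cs | z \in v].
Proof.
elim: cs => [|c cs IH]; first by case: (z == x).
rewrite cat_loops_cons mem_cat in_cons IH /=.
by case: (z \in c) (z == x) (z \in v) (has _ cs) (cs != [::]) => [] [] [] [] [].
Qed.

Lemma exists_cat_loops x s m : (m <= count_mem x s)%N ->
  exists cs v, size cs = m /\ s = cat_loops x cs v.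
Proof.
elim: s m => [|y s IH] [|m] //= le_ms; [by exists [::], [::] | by exists [::], (y :: s) |].
have [eq_yx|neq_yx] := eqVneq y x.
  move: le_ms; rewrite eq_yx eqxx add1n ltnS => /IH[cs [v [<- ->]]].
  by exists ([::] :: cs), v.
move: le_ms; rewrite (negbTE neq_yx) add0n => /IH[[|c cs] [v [//= [<-] ->]]].
by exists ((y :: c) :: cs), v.
Qed.

Lemma exists_cat_loops_prefix x s m : (m < count_mem x s)%N ->
  exists u cs v, size cs = m /\ s = u ++ x :: cat_loops x cs v.
Proof.
by move=> /exists_cat_loops[[|u cs] [v [//= [<-] ->]]]; exists u, cs, v.
Qed.

End Loops.

Lemma exists_dvd_subsum (I : eqType) (f : I -> nat) g (s : seq I) :
  (0 < g)%N -> (g <= size s)%N ->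
  exists s1 s2, [/\ perm_eq s (s1 ++ s2), (0 < size s2)%N & (g %| \sum_(y <- s2) f y)%N].
Proof.
move=> g_gt0 le_gs; pose F k := ((\sum_(y <- take k s) f y) %% g)%N.
have : ~~ uniq [seq F k | k <- iota 0 g.+1].
  apply/negP => /uniq_leq_size le_size.
  suff /le_size : {subset [seq F k | k <- iota 0 g.+1] <= iota 0 g}.
    by rewrite size_map !size_iota ltnn.
  by move=> _ /mapP[k _ ->]; rewrite mem_iota add0n ltn_pmod.
case/(uniqPn 0) => i [j []]; rewrite size_map size_iota => lt_ij lt_jg.
have lt_ig := ltn_trans lt_ij lt_jg.
rewrite !(nth_map 0) ?size_iota // !nth_iota // !add0n => eq_Fij.
have le_js : (j <= size s)%N by rewrite -ltnS (leq_trans lt_jg).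
set s2 := take (j - i) (drop i s).
have take_j : take j s = take i s ++ s2 by rewrite -takeD subnKC // ltnW.
exists (take i s ++ drop j s), s2; split.
- have s_eq : s = take i s ++ s2 ++ drop j s.
    by rewrite -{1}(cat_take_drop i s) -(cat_take_drop (j - i) (drop i s)) drop_drop subnK // ltnW.
  by rewrite {1}s_eq -catA perm_cat2l perm_catC.
- by rewrite size_takel ?subn_gt0 // size_drop leq_sub2r.
- move/eqP: eq_Fij; rewrite /F take_j big_cat -{1}[\sum_(y <- take i s) f y]addn0.
  by rewrite eqn_modDl mod0n eq_sym.
Qed.

Lemma exists_dvd_loops_keeping (T : eqType) g (x z : T) u cs v :
  (0 < g)%N -> (g < size cs)%N -> z \in u ++ x :: cat_loops x cs v ->
  exists cs' b, [/\ perm_eq cs (cs' ++ b), (0 < size b)%N,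
    (g %| \sum_(c <- b) (size c).+1)%N & z \in u ++ x :: cat_loops x cs' v].
Proof.
move=> g_gt0 lt_gcs z_in.
have [/hasP[c c_cs z_c] | no_loop_z] := boolP (has (fun c => z \in c) cs).
  have [|cs' [b [perm_rem b_gt0 dvd_b]]] :=
    exists_dvd_subsum (fun c => (size c).+1) g_gt0 (_ : (g <= size (rem c cs))%N).
    by rewrite size_rem // -ltnS prednK // (leq_ltn_trans _ lt_gcs).
  exists (c :: cs'), b; split => //.
    by apply: perm_trans (perm_to_rem c_cs) _; rewrite /= perm_cons.
  by rewrite mem_cat in_cons mem_cat_loops /= z_c !orbT.
have [cs' [b [perm_cs b_gt0 dvd_b]]] :=
  exists_dvd_subsum (fun c => (size c).+1) g_gt0 (ltnW lt_gcs).
exists cs', b; split => //.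
move: z_in; rewrite !mem_cat !in_cons !mem_cat_loops (negbTE no_loop_z).
by case/orP=> [-> | /orP[-> | /orP[/andP[-> _] | /orP[// | ->]]]]; rewrite ?orbT.
Qed.

Section Walks.
Variable n : nat.
Implicit Types (e : rel 'I_n) (x y : 'I_n) (u v c r : seq 'I_n).

Lemma is_walk_cat e u x r : is_walk e (u ++ x :: r) = is_walk e (rcons u x) && path e x r.
Proof. by case: u => [|y u] //=; rewrite cat_path rcons_path /= andbA. Qed.

Lemma ohead_rev_cat u x r : ohead (rev (u ++ x :: r)) = Some (last x r).
Proof. by rewrite rev_cat lastI rev_rcons. Qed.

Lemma wlen_cat u x r : wlen (u ++ x :: r) = (size u + size r)%N.
Proof. by rewrite /wlen size_cat /= addnS. Qed.

Lemma is_cycle_uniq e x c :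
  uniq (x :: c) -> path e x (rcons c x) -> is_cycle e (x :: rcons c x).
Proof.
move=> uniq_xc path_xc.
rewrite /is_cycle path_xc size_rcons last_rcons eqxx ltn0Sn !andTb.
have nth_xc k : nth x (x :: rcons c x) k = nth x (x :: c) k.
  rewrite -rcons_cons nth_rcons; case: ltnP => // le_ck.
  by rewrite nth_default //; case: eqP.
apply/allP => a _; apply/allP => b; rewrite mem_iota add0n /= size_rcons ltnS => le_b.
apply/implyP => /andP[lt_ab]; rewrite !nth_xc.
have [lt_bc | ge_bc] := ltnP b (size c).+1.
  by rewrite nth_uniq // ?(ltn_trans lt_ab) // => /eqP eq_ab; rewrite eq_ab ltnn in lt_ab.
have -> : b = (size c).+1 by apply/eqP; rewrite eqn_leq ge_bc le_b.
rewrite [nth _ _ (size c).+1]nth_default // eqxx andbT.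
by rewrite -{3}[x]/(nth x (x :: c) 0) nth_uniq // (leq_trans lt_ab).
Qed.

Lemma wlen_cycle_gt0 e c : is_cycle e c -> (0 < wlen c)%N.
Proof. by case: c => [|z p] //; rewrite /is_cycle => /and4P[]. Qed.

Lemma card_cycle e c : is_cycle e c -> #|c| = wlen c.
Proof.
case: c => [|z p] //; rewrite /is_cycle => /and4P[_ p_gt0 /eqP last_p no_chord].
have uniq_p : uniq p.
  apply/(uniqPn z) => -[a [b [lt_ab lt_bp eq_ab]]].
  move/allP/(_ a.+1): no_chord; rewrite mem_iota /= ltnS (ltn_trans lt_ab lt_bp).
  move=> /(_ isT)/allP/(_ b.+1); rewrite mem_iota /= !ltnS lt_bp lt_ab eq_ab eqxx.
  by move=> /(_ isT).
have z_p : z \in p.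
  rewrite -last_p; case/lastP: p p_gt0 {last_p no_chord uniq_p} => // p y _.
  by rewrite last_rcons mem_rcons mem_head.
rewrite /wlen /= -(card_uniqP uniq_p); apply: eq_card => y.
by rewrite in_cons; case: eqP => // ->.
Qed.

End Walks.

Section Weights.
Variables (R : realFieldType) (n : nat) (A : 'M[option R]_n).
Implicit Types (x y : 'I_n) (u v c t : seq 'I_n) (cs : seq (seq 'I_n)).

Lemma wweight1 x : wweight A [:: x] = 0.
Proof. by rewrite /wweight /= big_nil. Qed.

Lemma wweight_cons2 x y t : wweight A [:: x, y & t] = odflt 0 (A x y) + wweight A (y :: t).
Proof. by rewrite /wweight /= big_cons. Qed.

Lemma wweight_cat u x t : wweight A (u ++ x :: t) = wweight A (rcons u x) + wweight A (x :: t).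
Proof.
case: u => [|y u]; first by rewrite /= wweight1 add0r.
elim: u y => [|z u IH] y; first by rewrite /= !wweight_cons2 wweight1 addr0.
by rewrite [_ ++ _]/= wweight_cons2 IH rcons_cons wweight_cons2 addrA.
Qed.

Lemma wweight_cat_loops x cs v : wweight A (x :: cat_loops x cs v) =
  \sum_(c <- cs) wweight A (x :: rcons c x) + wweight A (x :: v).
Proof.
elim: cs => [|c cs IH]; first by rewrite big_nil add0r.
by rewrite cat_loops_cons -cat_cons wweight_cat IH big_cons addrA.
Qed.

Lemma wweight_closed_le0 x c : is_lambda A 0 ->
  path (arcA A) x (rcons c x) -> wweight A (x :: rcons c x) <= 0.
Proof.
move=> [_ cycle_le0]; elim: {c}(size c).+1 {-2}c x (ltnSn (size c)) => // k IH c x.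
rewrite ltnS => le_ck path_xc.
have [uniq_xc | /not_uniq_cat[s [y [l [t eq_xc]]]]] := boolP (uniq (x :: c)).
  have := cycle_le0 _ (is_cycle_uniq uniq_xc path_xc).
  by rewrite /cmean /wlen /= size_rcons pmulr_lle0 // invr_gt0 ltr0Sn.
have eq_w : x :: rcons c x = s ++ y :: l ++ y :: rcons t x.
  by rewrite -rcons_cons eq_xc rcons_cat rcons_cons rcons_cat rcons_cons.
have size_c : (size c).+1 = (size s + size l + size t).+2.
  by rewrite -[(size c).+1]/(size (x :: c)) eq_xc size_cat /= size_cat /=; lia.
have lt_lk : (size l < k)%N by lia.
have lt_stk : (size s + size t < k)%N by lia.
move: path_xc; rewrite -[path _ _ _]/(is_walk (arcA A) (x :: rcons c x)) eq_w is_walk_cat.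
case/andP=> path_s; rewrite -[path _ _ _]/(is_walk (arcA A) ((y :: l) ++ y :: rcons t x)).
rewrite is_walk_cat => /andP[path_l path_t].
rewrite wweight_cat -cat_cons wweight_cat addrCA -wweight_cat -[0]addr0.
apply: lerD; first exact: IH lt_lk path_l.
case: s {eq_w size_c} eq_xc lt_stk path_s path_t => [[-> _] | x' s [<- _]] lt_stk path_s path_t.
  exact: IH lt_stk path_t.
have -> : (x :: s) ++ y :: rcons t x = x :: rcons (s ++ y :: t) x by rewrite rcons_cat.
apply: IH; first by move: lt_stk; rewrite size_cat /= addnS addSn.
rewrite rcons_cat -[path _ _ _]/(is_walk (arcA A) ((x :: s) ++ y :: rcons t x)).
by rewrite is_walk_cat path_s path_t.
Qed.

End Weights.

Section DropLoops.
Variables (R : realFieldType) (n : nat) (A : 'M[option R]_n).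
Variables (u v : seq 'I_n) (x : 'I_n) (cs cs' b : seq (seq 'I_n)).
Hypothesis perm_cs : perm_eq cs (cs' ++ b).

Lemma walk_from_to_drop_loops i j :
  walk_from_to A i j (u ++ x :: cat_loops x cs v) ->
  walk_from_to A i j (u ++ x :: cat_loops x cs' v).
Proof.
case/and3P=> walk_W head_W last_W; apply/and3P; split.
- move: walk_W; rewrite !is_walk_cat !path_cat_loops (perm_all _ perm_cs) all_cat.
  by case/and3P=> -> /andP[-> _] ->.
- by case: (u) head_W.
- by move: last_W; rewrite !ohead_rev_cat !last_cat_loops.
Qed.

Lemma wlen_drop_loops :
  wlen (u ++ x :: cat_loops x cs v) =
  (wlen (u ++ x :: cat_loops x cs' v) + \sum_(c <- b) (size c).+1)%N.
Proof. by rewrite !wlen_cat !size_cat_loops (perm_big _ perm_cs) big_cat /=; lia. Qed.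

Lemma wweight_drop_loops : is_lambda A 0 ->
  is_walk (arcA A) (u ++ x :: cat_loops x cs v) ->
  wweight A (u ++ x :: cat_loops x cs v) <= wweight A (u ++ x :: cat_loops x cs' v).
Proof.
move=> lambda0; rewrite is_walk_cat path_cat_loops (perm_all _ perm_cs) all_cat.
case/and3P=> _ /andP[_ /allP loops_b] _.
rewrite !wweight_cat !wweight_cat_loops (perm_big _ perm_cs) big_cat /= lerD2l lerD2r gerDl.
by rewrite big_seq sumr_le0 // => c /loops_b; apply: wweight_closed_le0.
Qed.

Lemma twice_optimal_drop_loops g Z0 i j :
  is_lambda A 0 -> twice_optimal A g Z0 i j (u ++ x :: cat_loops x cs v) ->
  (0 < size b)%N -> (g %| \sum_(c <- b) (size c).+1)%N ->
  ~~ has (mem Z0) (u ++ x :: cat_loops x cs' v).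
Proof.
move=> lambda0 [to_W _ opt_W] b_gt0 dvd_b; apply/negP => Z0_W'.
have b_len_gt0 : (0 < \sum_(c <- b) (size c).+1)%N by case: (b) b_gt0 => // c b' _; rewrite big_cons.
have [|le_W'W min_W] := opt_W _ (walk_from_to_drop_loops to_W) Z0_W'.
  by rewrite wlen_drop_loops; case/dvdnP: dvd_b => q ->; rewrite addnC modnMDl.
have walk_W : is_walk (arcA A) (u ++ x :: cat_loops x cs v) by case/and3P: to_W.
have := min_W (le_anti (andb_true_intro (conj le_W'W (wweight_drop_loops lambda0 walk_W)))).
by rewrite wlen_drop_loops -{2}[wlen _]addn0 leq_add2l leqNgt b_len_gt0.
Qed.

End DropLoops.

Lemma sum_count_mem (T : finType) (s : seq T) : (\sum_(y : T) count_mem y s)%N = size s.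
Proof.
elim: s => [|a s IH] /=; first by rewrite big1.
rewrite (eq_bigr (fun y => (a == y) + count_mem y s)%N) // big_split /= IH.
rewrite (bigD1 a) //= eqxx big1 // => y neq_ya.
by rewrite eq_sym (negbTE neq_ya).
Qed.

Lemma sum_if_mem (T : finType) (s : seq T) (k : nat) :
  (\sum_(y : T) (if y \in s then k else k.+1) + #|s|)%N = (#|T| * k.+1)%N.
Proof.
rewrite -sum1_card [X in (_ + X)%N]big_mkcond -big_split /= -sum_nat_const.
by apply: eq_bigr => y _; case: (y \in s); rewrite ?addn1 ?addn0.
Qed.

Lemma count_mem_le_twice_optimal (R : realFieldType) (n : nat) (A : 'M[option R]_n)
    g Z0 i j W (y : 'I_n) :
  is_lambda A 0 -> (0 < g)%N -> twice_optimal A g Z0 i j W ->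
  (count_mem y W <= if y \in Z0 then g else g.+1)%N.
Proof.
move=> lambda0 g_gt0 opt_W; rewrite leqNgt; apply/negP.
have [_ /hasP[z z_W z_Z0] _] := opt_W.
case: ifP => [y_Z0 | y_notZ0] /exists_cat_loops_prefix[u [cs [v [size_cs eq_W]]]].
  have [cs' [b [perm_cs b_gt0 dvd_b]]] :=
    exists_dvd_subsum (fun c => (size c).+1) g_gt0 (eq_leq (esym size_cs)).
  rewrite eq_W in opt_W; apply/negP: (twice_optimal_drop_loops perm_cs lambda0 opt_W b_gt0 dvd_b).
  by rewrite negbK; apply/hasP; exists y; rewrite // mem_cat mem_head orbT.
rewrite eq_W in opt_W z_W; have lt_gcs : (g < size cs)%N by rewrite size_cs.
have [cs' [b [perm_cs b_gt0 dvd_b z_W']]] := exists_dvd_loops_keeping g_gt0 lt_gcs z_W.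
apply/negP: (twice_optimal_drop_loops perm_cs lambda0 opt_W b_gt0 dvd_b).
by rewrite negbK; apply/hasP; exists z.
Qed.

Theorem lemmal (R : realFieldType) (n : nat) (A : 'M[option R]_n)
    (g : nat) (Z0 : seq 'I_n) :
  is_lambda A 0 ->
  is_g A g ->
  is_T1 A (DM g n) ->
  unique_short_cycle A g Z0 ->
  forall (i j : 'I_n) (W : seq 'I_n), interesting A g Z0 i j W ->
  forall x : 'I_n, count_mem x W = (if x \in Z0 then g else g.+1)%N.
Proof.
move=> lambda0 _ _ [cycle_Z0 len_Z0 _] i j W [opt_W len_W] x.
have card_Z0 : #|Z0| = g by rewrite -len_Z0 (card_cycle cycle_Z0).
have g_gt0 : (0 < g)%N by rewrite -len_Z0 (wlen_cycle_gt0 cycle_Z0).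
have le_gn : (g <= n)%N by rewrite -card_Z0 -[n in (_ <= n)%N]card_ord max_card.
have le_count y := count_mem_le_twice_optimal y lambda0 g_gt0 opt_W.
have size_W : size W = (wlen W).+1 by case: opt_W => /and3P[]; case: (W).
have sum_bound : (\sum_(y : 'I_n) (if y \in Z0 then g else g.+1) + g = n * g.+1)%N.
  by rewrite -[X in (_ + X)%N = _]card_Z0 sum_if_mem card_ord.
have := leqif_sum (fun y (_ : true) => leqif_eq (le_count y)).
rewrite sum_count_mem size_W len_W /DM => -[_].
have -> : (g * n + n - g.*2 + g - 1).+1 = (\sum_(y : 'I_n) (if y \in Z0 then g else g.+1))%N.
  by rewrite -mul2n; nia.
by rewrite eqxx => /esym/forallP/(_ x)/eqP.
Qed.
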